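(* Let $\Gamma$ be an imperfect-recall extensive-form game, $i\in\mathcal N$ a player, and $\Gamma'$ a game with the same game tree as $\Gamma$ but potentially different infosets. If $\Gamma'\succeq_i\Gamma$ and player $i$ has perfect recall in $\Gamma'$, then $\Gamma'\succeq_i\mathrm{pr}_i(\Gamma)$. Moreover, player $i$ has perfect recall in $\mathrm{pr}_i(\Gamma)$.
   Context: An extensive-form game consists of a finite rooted tree (node set $\mathcal H$, leaves $\mathcal Z$, actions $A_h$ at nonterminal nodes), a finite set $\mathcal N$ of players plus chance, an assignment of nonterminal nodes to players or chance (with $\mathcal H_i$ the nodes of player $i$), chance distributions, utilities $u_i:\mathcal Z\to\mathbb R_{\ge0}$, and for each $i$ a partition $\mathcal I_i$ of $\mathcal H_i$ into infosets, all nodes of an infoset having the same action set. The game tree consists of $\mathcal H$, actions and chance distributions. For a node $h$ at depth $d$, with root-to-$h$ path $(h_0,\dots,h_{d-1})$ (excluding $h$), $\mathrm{obs}(h)=(i_k,I_k,a_k)_{k=0}^{d-1}$ records the player acting at $h_k$, the infoset of $h_k$ and the action taken; $\mathrm{obs}_i(h)$ is the subsequence with $i_k=i$. Player $i$ has perfect recall if $\mathrm{obs}_i(h)=\mathrm{obs}_i(h')$ for all $I\in\mathcal I_i$ and $h,h'\in I$; a game is imperfect-recall if some player lacks perfect recall. For games $\Gamma,\Gamma'$ with the same game tree and utilities, $\Gamma'\succeq_i\Gamma$ means every infoset of player $i$ in $\Gamma$ is a disjoint union of infosets of player $i$ in $\Gamma'$. $\mathrm{pr}_i(\Gamma)$ is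 the game with the same tree and utilities as $\Gamma$ in which each $I\in\mathcal I_i$ is partitioned into the equivalence classes of $h\sim h'\iff\mathrm{obs}_i(h)=\mathrm{obs}_i(h')$ (obs computed in $\Gamma$), other players' infosets unchanged. *)

(* Extensive-form games with nodes represented as histories
   (sequences of actions from the root). *)
From HB Require Import structures.
From mathcomp Require Import all_boot all_order all_algebra.
Set Implicit Arguments. Unset Strict Implicit. Unset Printing Implicit Defensive.
Import Order.TTheory GRing.Theory Num.Theory.
Local Open Scope ring_scope.

Section Games.
Variables (P A : finType) (R : numDomainType).

(* Everything in a game except the information partition:
   the game tree (node set as a finite prefix-closed set of histories, actions,
   chance distributions), the assignment of nodes to players
   (Some i = player i, None = chance) and the utilities. *)
Record base := Base {
  nodes : seq (seq A);
  who : seq A -> option P;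
  chance : seq A -> A -> R;
  util : P -> seq A -> R }.

(* A game: base data plus, for every player, a relation describing the
   partition of that player's nodes into infosets (h ~ h' iff same infoset). *)
Record game := Game {
  gbase : base;
  ginfo : P -> rel (seq A) }.

Definition actions (B : base) (h : seq A) : seq A :=
  [seq a <- enum A | rcons h a \in nodes B].

Definition is_leaf (B : base) (h : seq A) : bool :=
  (h \in nodes B) && (actions B h == [::]).

Definition nonterminal (B : base) (h : seq A) : bool :=
  (h \in nodes B) && (actions B h != [::]).

Definition node_of (G : game) (i : P) (h : seq A) : bool :=
  nonterminal (gbase G) h && (who (gbase G) h == Some i).

Definition wf_base (B : base) : Prop :=
  [/\ [::] \in nodes B,
      (forall h a, rcons h a \in nodes B -> h \in nodes B),
      (forall h, nonterminal B h -> who B h = None ->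
          (forall a, a \in actions B h -> 0 <= chance B h a) /\
          \sum_(a <- actions B h) chance B h a = 1)
    & (forall i z, is_leaf B z -> 0 <= util B i z)].

Definition wf_game (G : game) : Prop :=
  wf_base (gbase G) /\
  forall i : P,
    [/\ {in node_of G i, reflexive (ginfo G i)},
        {in node_of G i &, forall h h', ginfo G i h h' -> ginfo G i h' h},
        {in node_of G i & &, forall h h' h'',
            ginfo G i h h' -> ginfo G i h' h'' -> ginfo G i h h''}
      & {in node_of G i &, forall h h', ginfo G i h h' ->
            actions (gbase G) h = actions (gbase G) h'}].

Definition infoset (G : game) (i : P) (h : seq A) : seq (seq A) :=
  [seq h' <- nodes (gbase G) | node_of G i h' && ginfo G i h h'].

Definition is_infoset (G : game) (i : P) (I : seq (seq A)) : Prop :=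
  exists2 h, node_of G i h & I = infoset G i h.

(* infoset component recorded in obs; chance nodes have no infosets,
   we record the singleton node (irrelevant for obs_i). *)
Definition iset_of (G : game) (o : option P) (h : seq A) : seq (seq A) :=
  if o is Some i then infoset G i h else [:: h].

(* obs(h) = (i_k, I_k, a_k)_{k < depth h}, with h_k = take k h (the k-th node
   on the root-to-h path) and a_k = nth k h (the action taken there). *)
Definition obs (G : game) (h : seq A) : seq (option P * seq (seq A) * A) :=
  [seq (who (gbase G) p.1, iset_of G (who (gbase G) p.1) p.1, p.2)
  | p <- zip [seq take k h | k <- iota 0 (size h)] h].

Definition obs_i (G : game) (i : P) (h : seq A) :=
  [seq x <- obs G h | x.1.1 == Some i].

Definition perfect_recall (G : game) (i : P) : Prop :=
  forall I, is_infoset G i I -> {in I &, forall h h', obs_i G i h = obs_i G i h'}.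

Definition imperfect_recall (G : game) : Prop :=
  exists i : P, ~ perfect_recall G i.

(* G' ⪰_i G : same game tree and utilities (same base), and every infoset of
   player i in G is a (disjoint) union of infosets of player i in G'. *)
Definition refines (G' G : game) (i : P) : Prop :=
  gbase G' = gbase G /\
  forall I, is_infoset G i I ->
    exists S : seq (seq (seq A)),
      (forall J, J \in S -> is_infoset G' i J) /\
      (forall h, (h \in I) = has (fun J => h \in J) S).

Definition pr (G : game) (i : P) : game :=
  Game (gbase G)
       (fun j => if j == i then (fun h h' => ginfo G i h h' && (obs_i G i h == obs_i G i h'))
                 else ginfo G j).

End Games.

(* Refining player i's information so that it distinguishes nodes with
   different observation histories restores perfect recall: the observation
   history of a node in pr_i(G) is a function of its observation history in G
   (each recorded infoset is cut down to the nodes sharing the history seen so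
   far), so nodes that pr_i(G) groups together also agree on their pr_i(G)
   histories.
   Every G'-infoset lies inside one G-infoset, so equal G'-histories give equal
   G-histories; hence each G'-infoset inside a G-infoset I is either contained
   in or disjoint from each pr_i(G)-infoset inside I, and the pr_i(G)-infosets
   are unions of G'-infosets. *)
From mathcomp Require Import all_boot all_order all_algebra.
Set Implicit Arguments. Unset Strict Implicit. Unset Printing Implicit Defensive.

Section History.
Variable T : Type.

Definition hist (s : seq T) : seq (seq T * T) :=
  zip [seq take k s | k <- iota 0 (size s)] s.

Lemma hist_rcons s x : hist (rcons s x) = rcons (hist s) (s, x).
Proof.
rewrite /hist size_rcons -addn1 iotaD add0n map_cat /= cats1.
have -> : [seq take k (rcons s x) | k <- iota 0 (size s)] =
          [seq take k s | k <- iota 0 (size s)].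
  apply/eq_in_map => k; rewrite mem_iota add0n => /andP[_ lt_k].
  by rewrite -cats1 takel_cat // ltnW.
have -> : take (size s) (rcons s x) = s by rewrite -cats1 take_size_cat.
by rewrite zip_rcons // size_map size_iota.
Qed.

End History.

Lemma mem_hist (T : eqType) (s : seq T) p x :
  (p, x) \in hist s -> prefix (rcons p x) s.
Proof.
elim/last_ind: s => [|s y IH] //; rewrite hist_rcons mem_rcons inE.
case/orP => [/eqP[-> ->]|/IH pre_s]; first exact: prefix_refl.
exact: prefix_trans pre_s (prefix_rcons _ _).
Qed.

Lemma map_transfer (T U V : eqType) (f : T -> U) (g : T -> V) (s t : seq T) :
  (forall x y, x \in s -> y \in t -> f x = f y -> g x = g y) ->
  map f s = map f t -> map g s = map g t.
Proof.
elim: s t => [|x s IH] [|y t] //= fg [fxy fst].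
rewrite (fg x y) ?mem_head // (IH t) // => u v us vt.
by apply: fg; rewrite inE ?us ?vt orbT.
Qed.

Lemma cover_sub_saturated (T : eqType) (I K : seq T) (S : seq (seq T)) :
  {subset K <= I} ->
  (forall h, (h \in I) = has (fun J => h \in J) S) ->
  (forall J, J \in S -> {in J &, forall h h', h \in K -> h' \in K}) ->
  forall h, (h \in K) = has (fun J => h \in J) [seq J <- S | has (mem K) J].
Proof.
move=> sub_KI cover_I sat_K h; apply/idP/hasP => [hK|[J]].
  have /hasP[J JS hJ] : has (fun J => h \in J) S by rewrite -cover_I sub_KI.
  by exists J => //; rewrite mem_filter JS andbT; apply/hasP; exists h.
rewrite mem_filter => /andP[/hasP[h1 h1J h1K] JS] hJ.
exact: (sat_K J JS h1 h).
Qed.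

Section Games.
Variables (P A : finType) (R : numDomainType).
Implicit Types (B : base P A R) (G : game P A R).

Lemma prefix_node B x h :
  wf_base B -> prefix x h -> h \in nodes B -> x \in nodes B.
Proof.
case=> _ node_rcons _ _ /prefixP[s ->] {h}.
elim/last_ind: s => [|s a IH]; first by rewrite cats0.
by rewrite -rcons_cat => /node_rcons.
Qed.

Definition turns B i h := [seq pa <- hist h | who B pa.1 == Some i].

Lemma obs_i_turns G i h :
  obs_i G i h = [seq (Some i, infoset G i pa.1, pa.2) | pa <- turns (gbase G) i h].
Proof.
rewrite /obs_i /obs filter_map /turns /preim /=.
by apply/eq_in_map => -[p a]; rewrite mem_filter /= => /andP[/eqP -> _].
Qed.

Lemma node_of_turns G i h p a :
  wf_base (gbase G) -> h \in nodes (gbase G) ->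
  (p, a) \in turns (gbase G) i h -> node_of G i p.
Proof.
move=> wfB hN; rewrite mem_filter /= => /andP[who_p /mem_hist pre_h].
have paN := prefix_node wfB pre_h hN.
have pN : p \in nodes (gbase G) by rewrite (prefix_node wfB (prefix_rcons p a)).
have a_act : a \in actions (gbase G) p by rewrite mem_filter paN mem_enum.
rewrite /node_of who_p andbT /nonterminal pN /=.
by apply: contraTneq a_act => ->.
Qed.

Lemma obs_i_rcons G i h a :
  obs_i G i (rcons h a) = obs_i G i h ++
    (if who (gbase G) h == Some i then [:: (Some i, infoset G i h, a)] else [::]).
Proof.
rewrite /obs_i {1}/obs -/(hist (rcons h a)) hist_rcons map_rcons -/(obs G h).
rewrite -cats1 filter_cat /=.
by case: eqP => [->|].
Qed.

Lemma infoset_pr G i h :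
  infoset (pr G i) i h = [seq x <- infoset G i h | obs_i G i h == obs_i G i x].
Proof.
rewrite /infoset /= eqxx -filter_predI; apply: eq_filter => x /=.
by rewrite andbA [RHS]andbC.
Qed.

Lemma mem_infoset_pr G i h h' :
  (h' \in infoset (pr G i) i h) = (obs_i G i h == obs_i G i h') && (h' \in infoset G i h).
Proof. by rewrite infoset_pr mem_filter. Qed.

Definition restrict_obs G i (L : seq (option P * seq (seq A) * A)) I :=
  [seq x <- I | L == obs_i G i x].

Definition obs_pr G i (L : seq (option P * seq (seq A) * A)) :=
  [seq (x.2.1.1, restrict_obs G i x.1 x.2.1.2, x.2.2) | x <- hist L].

Lemma obs_i_pr G i h : obs_i (pr G i) i h = obs_pr G i (obs_i G i h).
Proof.
elim/last_ind: h => [|h a IH] //.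
rewrite !obs_i_rcons IH /=; case: eqP => _; last by rewrite !cats0.
by rewrite !cats1 /obs_pr hist_rcons map_rcons infoset_pr.
Qed.

Lemma pr_perfect_recall G i : perfect_recall (pr G i) i.
Proof.
move=> I [h0 _ ->] h h'; rewrite !mem_infoset_pr.
by move=> /andP[/eqP obs_h _] /andP[/eqP obs_h' _]; rewrite !obs_i_pr -obs_h -obs_h'.
Qed.

Lemma node_of_nodes G i h : node_of G i h -> h \in nodes (gbase G).
Proof. by case/andP => /andP[]. Qed.

Lemma mem_infoset G i h h' :
  (h' \in infoset G i h) = node_of G i h' && ginfo G i h h'.
Proof.
by rewrite mem_filter; apply: andb_idr => /andP[/node_of_nodes].
Qed.

Section Refinement.
Variables (G G' : game P A R) (i : P).
Hypotheses (wfG : wf_game G) (wfG' : wf_game G') (refG'G : refines G' G i).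

Let same_base : gbase G' = gbase G. Proof. by case: refG'G. Qed.

Let same_node_of : node_of G' i =1 node_of G i.
Proof. by move=> h; rewrite /node_of same_base. Qed.

Lemma infoset_eq p q :
  node_of G i p -> node_of G i q -> ginfo G i p q -> infoset G i p = infoset G i q.
Proof.
have [_ Gsym Gtrans _] := wfG.2 i => pN qN pq.
apply: eq_in_filter => x _; apply: andb_id2l => xN; apply/idP/idP.
  by apply: Gtrans (Gsym _ _ pN qN pq).
exact: Gtrans.
Qed.

Lemma refines_ginfo p q :
  node_of G i p -> node_of G i q -> ginfo G' i p q -> ginfo G i p q.
Proof.
have [Grefl _ _ _] := wfG.2 i; have [_ _ G'trans _] := wfG'.2 i.
move=> pN qN pq; have [_ cover_I] := refG'G.
have [S [S_infosets I_cover]] := cover_I _ (ex_intro2 _ _ p pN erefl).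
have : p \in infoset G i p by rewrite mem_infoset pN Grefl.
rewrite I_cover => /hasP[J JS pJ].
have [r rN defJ] := S_infosets J JS.
have qJ : q \in J.
  move: pJ; rewrite defJ !mem_infoset !same_node_of qN => /andP[_ rp] /=.
  have [pN' qN'] : node_of G' i p /\ node_of G' i q by rewrite !same_node_of.
  exact: (G'trans r p q rN pN' qN' rp pq).
have : q \in infoset G i p by rewrite I_cover; apply/hasP; exists J.
by rewrite mem_infoset => /andP[].
Qed.

Lemma refines_infoset_eq p q :
  node_of G i p -> node_of G i q ->
  infoset G' i p = infoset G' i q -> infoset G i p = infoset G i q.
Proof.
have [G'refl _ _ _] := wfG'.2 i.
move=> pN qN eqI; apply: infoset_eq (refines_ginfo pN qN _) => //.
have qN' : node_of G' i q by rewrite same_node_of.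
have : q \in infoset G' i p by rewrite eqI mem_infoset qN' G'refl.
by rewrite mem_infoset => /andP[].
Qed.

Lemma refines_obs_i h h' :
  h \in nodes (gbase G) -> h' \in nodes (gbase G) ->
  obs_i G' i h = obs_i G' i h' -> obs_i G i h = obs_i G i h'.
Proof.
move=> hN h'N; rewrite !obs_i_turns same_base; apply: map_transfer.
move=> [p a] [q b] pa qb [eqI ->]; congr (_, _, _).
by apply: refines_infoset_eq eqI; [apply: node_of_turns pa | apply: node_of_turns qb]; case: wfG.
Qed.

Lemma pr_refines : perfect_recall G' i -> refines G' (pr G i) i.
Proof.
move=> recallG'; split=> [|_ [h0 h0N ->]]; first exact: same_base.
have [_ cover_I] := refG'G.
have [S [S_infosets I_cover]] := cover_I _ (ex_intro2 _ _ h0 h0N erefl).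
exists [seq J <- S | has (mem (infoset (pr G i) i h0)) J]; split.
  by move=> J; rewrite mem_filter => /andP[_ /S_infosets].
apply: (cover_sub_saturated _ I_cover).
  by move=> h; rewrite mem_infoset_pr => /andP[].
move=> J JS h h' hJ h'J; rewrite !mem_infoset_pr => /andP[/eqP obs_h _].
have J_I x : x \in J -> x \in infoset G i h0.
  by move=> xJ; rewrite I_cover; apply/hasP; exists J.
have J_nodes x : x \in J -> x \in nodes (gbase G).
  by move/J_I; rewrite mem_infoset => /andP[/node_of_nodes].
rewrite J_I // andbT obs_h; apply/eqP/refines_obs_i; rewrite ?J_nodes //.
exact: recallG' (S_infosets J JS) h h' hJ h'J.
Qed.

End Refinement.

End Games.

Theorem proposition1 (P A : finType) (R : numDomainType) (G G' : game P A R) (i : P) :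
  wf_game G -> wf_game G' ->
  imperfect_recall G ->
  gbase G' = gbase G ->
  refines G' G i ->
  perfect_recall G' i ->
  refines G' (pr G i) i /\ perfect_recall (pr G i) i.
Proof.
move=> wfG wfG' _ _ refG'G recallG'.
split; [exact: pr_refines | exact: pr_perfect_recall].
Qed.
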